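(* Let $\ell$ be a positive integer and $n$ an integer such that $a:=n/\ell\in\mathbb Z$ and $n\ell+\ell^2>0$. Let $\xi_\ell=e^{2\pi i/\ell}$ and $I=\mathbb Z\cap[n,n+\ell-1]$. For parameters $(N,L)$ with $L\in\mathbb Z_{>0}$, $N\in\mathbb Z$, $A:=N/L\in\mathbb Z$, $NL+L^2>0$ (this will be used for $(N,L)=(n,\ell)$ and $(N,L)=(a,1)$), define for $n'\in\mathbb R$, $\ell'\in\mathbb Z$ $$\chi_{\mathsf A^{N,L}_{n',\ell'}}(u,v;\tau)=-i\,\frac{\theta_1(u;\tau)}{\eta(\tau)^3}\sum_{m\in\mathbb Z}\frac{(-1)^{k}e^{2\pi i v k}\,e^{2\pi i u(Ak+n'+\frac12)}\,e^{\pi i\tau k(k(2A+1)+2n'+1)}}{1-e^{2\pi i(u+k\tau)}},\qquad k=mL+\ell',$$ and for $n',e'\in\mathbb C$ $$\chi_{\mathsf T^{N,L}_{n',e'}}(u,v;\tau)=i(-1)^{\lfloor e'\rfloor}\frac{\theta_1(u;\tau)}{\eta(\tau)^3}\sum_{m\in\mathbb Z}(-1)^{mL}e^{2\pi i v(e'+mL)}e^{2\pi i u(n'+mN)}e^{2\pi i\tau\left(n'e'+\frac{e'^2}{2}+\frac{m^2}{2}(2NL+L^2)+m(Ne'+n'L+Le')\right)},$$ with $\lfloor e'\rfloor$ the largest integer $\le\operatorname{Re}e'$. Then for all $n'\in\mathbb R$ and $t\in\mathbb Z$, $$\chi_{\mathsf A^{n,\ell}_{n',t}}(u,v;\tau)=\frac1\ell\sum_{s\in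 I}\xi_\ell^{-ts}\chi_{\mathsf A^{a,1}_{n',0}}\Big(u,v+\frac s\ell;\tau\Big),\qquad \chi_{\mathsf A^{a,1}_{n',0}}\Big(u,v+\frac t\ell;\tau\Big)=\sum_{s\in I}\xi_\ell^{ts}\chi_{\mathsf A^{n,\ell}_{n',s}}(u,v;\tau),$$ and for all $n',e'\in\mathbb C$ and $s,t\in\mathbb Z$, $$\chi_{\mathsf T^{n,\ell}_{n'+tn/\ell,\,e'+t}}(u,v;\tau)=\frac1\ell\sum_{s\in I}\xi_\ell^{-st}e^{-2\pi i e's/\ell}\chi_{\mathsf T^{a,1}_{n',e'}}\Big(u,v+\frac s\ell;\tau\Big),$$ $$\chi_{\mathsf T^{a,1}_{n',e'}}\Big(u,v+\frac s\ell;\tau\Big)=e^{2\pi i e's/\ell}\sum_{t\in I}\xi_\ell^{st}\chi_{\mathsf T^{n,\ell}_{n'+tn/\ell,\,e'+t}}(u,v;\tau),$$ for all $u,v\in\mathbb C$, $\tau\in\mathbb H$ for which the atypical series are defined.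
   Context: $\theta_1(u;\tau)=-i\sum_{n\in\mathbb Z}(-1)^n e^{\pi i(n+\frac12)^2\tau+2\pi i u(n+\frac12)}$ and $\eta(\tau)=e^{\pi i\tau/12}\prod_{j\ge1}(1-e^{2\pi i j\tau})$. The functions $\chi_{\mathsf A}$, $\chi_{\mathsf T}$ are characters of atypical, respectively typical, modules of W-superalgebras extending $\widehat{\mathfrak{gl}}(1|1)$; $\mathsf A^{a,1}$, $\mathsf T^{a,1}$ are the case $(N,L)=(a,1)$. *)

From Stdlib Require Import Reals ZArith.
From Coquelicot Require Import Coquelicot.

Open Scope C_scope.

Definition Cexp (z : C) : C :=
  (exp (Re z) * cos (Im z), exp (Re z) * sin (Im z))%R.

Definition CZ (k : Z) : C := RtoC (IZR k).
Definition twoPiI : C := (0, 2 * PI)%R.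
Definition PiI : C := (0, PI)%R.

Definition sgnZ (k : Z) : C := if Z.even k then RtoC 1 else RtoC (-1).

Definition Clim (s : nat -> C) : C :=
  (real (Lim_seq (fun M => Re (s M))), real (Lim_seq (fun M => Im (s M)))).

(* Sum over Z: limit of the symmetric partial sums  sum_{m=-M}^{M} f m. *)
Definition sumZ (f : Z -> C) : C :=
  Clim (fun M => sum_n (fun j => f (Z.of_nat j - Z.of_nat M)%Z) (2 * M)).

Fixpoint prodC (f : nat -> C) (M : nat) : C :=
  match M with
  | O => RtoC 1
  | S M' => prodC f M' * f (S M')
  end.

Definition sumI (n l : Z) (f : Z -> C) : C :=
  sum_n (fun j => f (n + Z.of_nat j)%Z) (Z.to_nat (l - 1)).

Definition theta1 (u tau : C) : C :=
  - Ci * sumZ (fun k =>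
      let h := CZ k + RtoC (/2) in
      sgnZ k * Cexp (PiI * h * h * tau + twoPiI * u * h)).

Definition eta (tau : C) : C :=
  Cexp (PiI * tau / RtoC 12) *
  Clim (fun M => prodC (fun j => RtoC 1 - Cexp (twoPiI * RtoC (INR j) * tau)) M).

Definition floorRe (e : C) : Z := Int_part (Re e).

Definition chiA (N L : Z) (n' : R) (l' : Z) (u v tau : C) : C :=
  let A := (N / L)%Z in
  - Ci * theta1 u tau / (eta tau * eta tau * eta tau) *
  sumZ (fun m =>
    let k := (m * L + l')%Z in
    sgnZ k * Cexp (twoPiI * v * CZ k)
    * Cexp (twoPiI * u * (CZ (A * k) + RtoC n' + RtoC (/2)))
    * Cexp (PiI * tau * CZ k * (CZ k * CZ (2 * A + 1) + RtoC (2 * n') + RtoC 1))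
    / (RtoC 1 - Cexp (twoPiI * (u + CZ k * tau)))).

Definition chiT (N L : Z) (n' e' : C) (u v tau : C) : C :=
  Ci * sgnZ (floorRe e') * theta1 u tau / (eta tau * eta tau * eta tau) *
  sumZ (fun m =>
    sgnZ (m * L) * Cexp (twoPiI * v * (e' + CZ (m * L)))
    * Cexp (twoPiI * u * (n' + CZ (m * N)))
    * Cexp (twoPiI * tau *
        (n' * e' + e' * e' / RtoC 2
         + CZ (m * m) / RtoC 2 * CZ (2 * N * L + L * L)
         + CZ m * (CZ N * e' + n' * CZ L + CZ L * e')))).

Definition xi (l k : Z) : C := Cexp (twoPiI * CZ k / CZ l).

From Stdlib Require Import Reals ZArith Lra Lia FunctionalExtensionality.
From Coquelicot Require Import Coquelicot.
Open Scope C_scope.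

(* Both characters are a prefactor times a sum over k in Z of terms g(k), restricted for
   (N, L) = (n, l) to the progression k = m l + t.  Shifting v by s / l multiplies g(k) by
   xi_l^(s k) (and, for the typical characters, by the constant e^(2 pi i e' s / l)), so the four
   identities are discrete Fourier inversion on Z / l Z: a twisted sum over Z splits into its
   residue classes modulo l, and a single class is recovered from the twisted sums through the
   orthogonality relation  sum_(s in I) xi_l^(s d) = l [l | d].  Every rearrangement is justified
   by the Gaussian decay of g in k, which holds because Im tau > 0 and a = n / l >= 0. *)

Ltac to_C := repeat match goal with
  | |- context [@plus ?G ?x ?y] => change (@plus G x y) with (Cplus x y)
  | |- context [@opp ?G ?x] => change (@opp G x) with (Copp x)
  | |- context [@mult ?G ?x ?y] => change (@mult G x y) with (Cmult x y)
  | |- context [@zero ?G] => change (@zero G) with (RtoC 0)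
  end;
  try match goal with |- @eq _ ?x ?y => change (@eq C x y) end.

Lemma Cexp_add (z w : C) : Cexp (z + w) = Cexp z * Cexp w.
Proof.
  destruct z as [a b], w as [c d]. unfold Cexp. simpl.
  rewrite exp_plus, cos_plus, sin_plus.
  apply injective_projections; simpl; ring.
Qed.

Lemma Cexp_0 : Cexp 0 = 1.
Proof.
  unfold Cexp; simpl. rewrite exp_0, cos_0, sin_0.
  apply injective_projections; simpl; ring.
Qed.

Lemma Cexp_opp_mul (z : C) : Cexp (- z) * Cexp z = 1.
Proof. rewrite <- Cexp_add, <- Cexp_0. f_equal. ring. Qed.

Lemma Cmod_Cexp (z : C) : Cmod (Cexp z) = exp (Re z).
Proof.
  unfold Cexp, Cmod. cbn [fst snd].
  replace ((exp (Re z) * cos (Im z)) ^ 2 + (exp (Re z) * sin (Im z)) ^ 2)%R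
    with ((exp (Re z)) ^ 2)%R.
  - rewrite sqrt_pow2; [reflexivity | left; apply exp_pos].
  - pose proof (sin2_cos2 (Im z)). unfold Rsqr in H. nra.
Qed.

Lemma CZ_add (a b : Z) : CZ (a + b) = CZ a + CZ b.
Proof. unfold CZ. rewrite plus_IZR. apply injective_projections; simpl; ring. Qed.

Lemma CZ_sub (a b : Z) : CZ (a - b) = CZ a - CZ b.
Proof. unfold CZ. rewrite minus_IZR. apply injective_projections; simpl; ring. Qed.

Lemma CZ_mul (a b : Z) : CZ (a * b) = CZ a * CZ b.
Proof. unfold CZ. rewrite mult_IZR. apply injective_projections; simpl; ring. Qed.

Lemma CZ_neq_0 (l : Z) : l <> 0%Z -> CZ l <> 0.
Proof. intros Hl H. apply (f_equal Re) in H. apply Hl, eq_IZR, H. Qed.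

Lemma Cexp_twoPiI_int (m : Z) : Cexp (twoPiI * CZ m) = 1.
Proof.
  assert (Hp : Cexp twoPiI = 1 /\ Cexp (- twoPiI) = 1).
  { unfold Cexp, twoPiI; simpl. rewrite Ropp_0, exp_0, cos_neg, sin_neg, cos_2PI, sin_2PI.
    split; apply injective_projections; simpl; ring. }
  induction m using Z.peano_ind.
  - rewrite <- Cexp_0. f_equal. apply injective_projections; simpl; ring.
  - rewrite <- Z.add_1_r, CZ_add. change (CZ 1) with (RtoC 1).
    replace (twoPiI * (CZ m + 1)) with (twoPiI * CZ m + twoPiI) by ring.
    rewrite Cexp_add, IHm, (proj1 Hp). ring.
  - rewrite <- Z.sub_1_r, CZ_sub. change (CZ 1) with (RtoC 1).
    replace (twoPiI * (CZ m - 1)) with (twoPiI * CZ m + - twoPiI) by ring.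
    rewrite Cexp_add, IHm, (proj2 Hp). ring.
Qed.

Lemma sgnZ_add (a b : Z) : sgnZ (a + b) = sgnZ a * sgnZ b.
Proof.
  unfold sgnZ. rewrite Z.even_add.
  destruct (Z.even a), (Z.even b); simpl; apply injective_projections; simpl; ring.
Qed.

Lemma sgnZ_mul_self (a : Z) : sgnZ a * sgnZ a = 1.
Proof. unfold sgnZ. destruct (Z.even a); apply injective_projections; simpl; ring. Qed.

Lemma Cmod_sgnZ (a : Z) : Cmod (sgnZ a) = 1%R.
Proof.
  unfold sgnZ. destruct (Z.even a).
  - apply Cmod_1.
  - rewrite Cmod_R, Rabs_left by lra. lra.
Qed.

Lemma floorRe_add_int (e : C) (t : Z) : floorRe (e + CZ t) = (floorRe e + t)%Z.
Proof.
  unfold floorRe. symmetry. apply Int_part_spec.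
  destruct (base_Int_part (Re e)) as [H1 H2].
  replace (Re (e + CZ t)) with (Re e + IZR t)%R by (unfold CZ, Re; simpl; ring).
  rewrite plus_IZR. lra.
Qed.

(** * Roots of unity *)

Section RootsOfUnity.

Variable l : Z.
Hypothesis hl : (0 < l)%Z.

Lemma xi_add (a b : Z) : xi l a * xi l b = xi l (a + b).
Proof.
  unfold xi. rewrite <- Cexp_add, CZ_add. f_equal.
  field. apply CZ_neq_0. lia.
Qed.

Lemma xi_mul_l (m : Z) : xi l (m * l) = 1.
Proof.
  unfold xi. rewrite <- (Cexp_twoPiI_int m), CZ_mul. f_equal.
  field. apply CZ_neq_0. lia.
Qed.

Lemma xi_eq (k : Z) : xi l k = Cexp (0, 2 * PI * (IZR k / IZR l))%R.
Proof.
  assert (IZR l <> 0)%R by (apply not_0_IZR; lia).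
  unfold xi. f_equal. unfold twoPiI, CZ. apply injective_projections; simpl; field; auto.
Qed.

Lemma Cmod_xi (k : Z) : Cmod (xi l k) = 1%R.
Proof. rewrite xi_eq, Cmod_Cexp. apply exp_0. Qed.

Lemma xi_neq_1 (d : Z) : (d mod l <> 0)%Z -> xi l d <> 1.
Proof.
  intros Hd H. rewrite xi_eq in H. unfold Cexp in H. simpl in H.
  apply (f_equal fst) in H. simpl in H. rewrite exp_0, Rmult_1_l in H.
  set (th := (PI * (IZR d / IZR l))%R).
  (* cos (2 th) = 1 - 2 sin^2 th, so sin th = 0 and th is a multiple of pi *)
  replace (2 * PI * (IZR d / IZR l))%R with (2 * th)%R in H by (unfold th; ring).
  rewrite cos_2a_sin in H.
  assert (Hs : sin th = 0%R) by nra.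
  apply sin_eq_0_0 in Hs. destruct Hs as [k Hk].
  assert (IZR l <> 0)%R by (apply not_0_IZR; lia).
  assert (Hdk : IZR d = IZR (k * l)).
  { rewrite mult_IZR. pose proof PI_RGT_0. apply (Rmult_eq_reg_l PI); [|lra].
    replace (PI * IZR d)%R with (th * IZR l)%R by (unfold th; field; auto).
    rewrite Hk. ring. }
  apply eq_IZR in Hdk. subst d. apply Hd, Z_mod_mult.
Qed.

End RootsOfUnity.

Lemma sum_n_first {G : AbelianMonoid} (a : nat -> G) (N : nat) :
  sum_n a (S N) = plus (a 0%nat) (sum_n (fun j => a (S j)) N).
Proof.
  induction N.
  - rewrite sum_Sn, !sum_O. reflexivity.
  - rewrite sum_Sn, IHN, sum_Sn. symmetry. apply plus_assoc.
Qed.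

Lemma sumI_ext (n l : Z) (F G : Z -> C) :
  (forall s, F s = G s) -> sumI n l F = sumI n l G.
Proof. intro E. unfold sumI. apply sum_n_ext. intro; apply E. Qed.

Lemma sumI_mult_l (n l : Z) (c : C) (F : Z -> C) :
  sumI n l (fun s => c * F s) = c * sumI n l F.
Proof. exact (sum_n_mult_l c _ _). Qed.

Lemma sumI_const_1 (n l : Z) : (0 < l)%Z -> sumI n l (fun _ => 1) = CZ l.
Proof.
  intro hl. unfold sumI.
  assert (E : forall N, sum_n (fun _ : nat => RtoC 1) N = RtoC (INR (S N))).
  { induction N.
    - rewrite sum_O. reflexivity.
    - rewrite sum_Sn, IHN, (S_INR (S N)), RtoC_plus. reflexivity. }
  rewrite E, INR_IZR_INZ. unfold CZ. do 2 f_equal. lia.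
Qed.

Lemma sumI_shift_periodic (n l : Z) (F : Z -> C) : (0 < l)%Z -> F (n + l)%Z = F n ->
  sumI n l (fun s => F (s + 1)%Z) = sumI n l F.
Proof.
  intros hl Hper. unfold sumI. set (N := Z.to_nat (l - 1)).
  assert (E1 : sum_n (fun j => F (n + Z.of_nat j)%Z) (S N) =
               F n + sum_n (fun j => F (n + Z.of_nat j + 1)%Z) N).
  { rewrite sum_n_first. to_C. rewrite Z.add_0_r. f_equal.
    apply sum_n_ext. intro j. f_equal. lia. }
  assert (E2 : sum_n (fun j => F (n + Z.of_nat j)%Z) (S N) =
               sum_n (fun j => F (n + Z.of_nat j)%Z) N + F n).
  { rewrite sum_Sn, <- Hper. to_C. do 3 f_equal. unfold N. lia. }
  rewrite E1 in E2.
  replace (sum_n (fun j => F (n + Z.of_nat j + 1)%Z) N)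
    with (F n + sum_n (fun j => F (n + Z.of_nat j + 1)%Z) N - F n) by ring.
  rewrite E2. ring.
Qed.

Lemma sumI_xi_mul (n l d : Z) : (0 < l)%Z ->
  sumI n l (fun s => xi l (s * d)) = if (d mod l =? 0)%Z then CZ l else 0.
Proof.
  intro hl. destruct (Z.eqb_spec (d mod l) 0) as [Hd | Hd].
  - apply Z_div_exact_2 in Hd; [|lia]. rewrite <- (sumI_const_1 n l hl).
    apply sumI_ext. intro s. rewrite Hd.
    replace (s * (l * (d / l)))%Z with (s * (d / l) * l)%Z by ring.
    apply xi_mul_l, hl.
  - set (T := sumI n l (fun s => xi l (s * d))).
    (* multiplying by xi^d shifts the summation range by one period *)
    assert (Hfix : xi l d * T = T).
    { unfold T. rewrite <- sumI_mult_l.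
      rewrite (sumI_ext _ _ _ (fun s => xi l ((s + 1) * d))).
      - apply (sumI_shift_periodic n l (fun s => xi l (s * d))); [exact hl|].
        replace ((n + l) * d)%Z with (n * d + d * l)%Z by ring.
        rewrite <- xi_add, xi_mul_l by exact hl. ring.
      - intro s. rewrite xi_add by exact hl. f_equal. ring. }
    assert (Hne : xi l d - 1 <> 0).
    { intro H. apply (xi_neq_1 l hl d Hd). rewrite <- (Cplus_0_l 1), <- H. ring. }
    replace T with ((xi l d * T - T) / (xi l d - 1)) by (field; exact Hne).
    rewrite Hfix. field. exact Hne.
Qed.

(** * Sums over Z *)

Definition is_sumZ (f : Z -> C) (s : C) : Prop :=
  exists s1 s2 : C,
    is_series (fun j : nat => f (Z.of_nat j)) s1 /\
    is_series (fun j : nat => f (- Z.of_nat (S j))%Z) s2 /\ s = s1 + s2.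

Lemma sum_n_symmetric (f : Z -> C) (M : nat) :
  sum_n (fun j => f (Z.of_nat j - Z.of_nat (S M))%Z) (2 * S M) =
  sum_n (fun j : nat => f (Z.of_nat j)) (S M) + sum_n (fun j : nat => f (- Z.of_nat (S j))%Z) M.
Proof.
  induction M.
  - simpl. rewrite !sum_Sn, !sum_O. to_C. simpl. ring.
  - replace (2 * S (S M))%nat with (S (S (2 * S M))) by lia.
    rewrite sum_n_first, sum_Sn.
    rewrite (sum_n_ext (fun j : nat => f (Z.of_nat (S j) - Z.of_nat (S (S M)))%Z)
       (fun j : nat => f (Z.of_nat j - Z.of_nat (S M))%Z)) by (intro; f_equal; lia).
    rewrite IHM, (sum_Sn (fun j : nat => f (Z.of_nat j)) (S M)),
      (sum_Sn (fun j : nat => f (- Z.of_nat (S j))%Z) M). to_C.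
    replace (Z.of_nat 0 - Z.of_nat (S (S M)))%Z with (- Z.of_nat (S (S M)))%Z by lia.
    replace (Z.of_nat (S (S (2 * S M))) - Z.of_nat (S (S M)))%Z
      with (Z.of_nat (S (S M))) by lia.
    ring.
Qed.

Lemma Clim_eq (s : nat -> C) (l : C) : filterlim s eventually (locally l) -> Clim s = l.
Proof.
  intro H. unfold Clim.
  assert (HRe : is_lim_seq (fun M => Re (s M)) (Re l)).
  { apply (filterlim_comp _ _ _ s fst _ _ _ H).
    apply filterlim_locally. intros eps. exists eps. intros y [H1 _]. exact H1. }
  assert (HIm : is_lim_seq (fun M => Im (s M)) (Im l)).
  { apply (filterlim_comp _ _ _ s snd _ _ _ H).
    apply filterlim_locally. intros eps. exists eps. intros y [_ H2]. exact H2. }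
  rewrite (is_lim_seq_unique _ _ HRe), (is_lim_seq_unique _ _ HIm).
  destruct l; reflexivity.
Qed.

Lemma filterlim_Cplus {T} {F} {FF : Filter F} (a b : T -> C) (la lb : C) :
  filterlim a F (locally la) -> filterlim b F (locally lb) ->
  filterlim (fun x => a x + b x) F (locally (la + lb)).
Proof.
  intros Ha Hb.
  exact (filterlim_comp_2 a b (@plus C_NormedModule) Ha Hb
           (@filterlim_plus _ C_NormedModule la lb)).
Qed.

Lemma is_sumZ_sumZ (f : Z -> C) (s : C) : is_sumZ f s -> sumZ f = s.
Proof.
  intros (s1 & s2 & H1 & H2 & ->).
  unfold sumZ. apply Clim_eq.
  apply filterlim_ext_loc with
    (fun M => sum_n (fun j : nat => f (Z.of_nat j)) M
              + sum_n (fun j : nat => f (- Z.of_nat (S j))%Z) (pred M)).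
  - exists 1%nat. intros [|M] HM; [lia|]. rewrite sum_n_symmetric. reflexivity.
  - apply filterlim_Cplus; [exact H1|].
    apply (filterlim_comp _ _ _ pred _ _ eventually); [|exact H2].
    intros P [N HN]. exists (S N). intros M HM. apply HN. lia.
Qed.

Lemma sumZ_ext (f g : Z -> C) : (forall k, f k = g k) -> sumZ f = sumZ g.
Proof. intro E. f_equal. apply functional_extensionality, E. Qed.

Lemma is_sumZ_ext (f g : Z -> C) (s : C) :
  (forall k, f k = g k) -> is_sumZ f s -> is_sumZ g s.
Proof.
  intros E (s1 & s2 & H1 & H2 & ->). exists s1, s2. repeat split.
  - exact (is_series_ext _ _ _ (fun j => E _) H1).
  - exact (is_series_ext _ _ _ (fun j => E _) H2).
Qed.

Lemma is_sumZ_scal (f : Z -> C) (s c : C) : is_sumZ f s -> is_sumZ (fun k => c * f k) (c * s).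
Proof.
  intros (s1 & s2 & H1 & H2 & ->). exists (c * s1), (c * s2). repeat split.
  - exact (is_series_scal_l c _ _ H1).
  - exact (is_series_scal_l c _ _ H2).
  - ring.
Qed.

Lemma is_sumZ_plus (f g : Z -> C) (s t : C) :
  is_sumZ f s -> is_sumZ g t -> is_sumZ (fun k => f k + g k) (s + t).
Proof.
  intros (s1 & s2 & H1 & H2 & ->) (t1 & t2 & G1 & G2 & ->).
  exists (s1 + t1), (s2 + t2). repeat split.
  - exact (is_series_plus _ _ _ _ H1 G1).
  - exact (is_series_plus _ _ _ _ H2 G2).
  - ring.
Qed.

Lemma is_sumZ_sum_n (F : nat -> Z -> C) (s : nat -> C) (N : nat) :
  (forall j, (j <= N)%nat -> is_sumZ (F j) (s j)) ->
  is_sumZ (fun k => sum_n (fun j => F j k) N) (sum_n s N).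
Proof.
  induction N; intro H.
  - rewrite sum_O. apply is_sumZ_ext with (F 0%nat).
    + intro. rewrite sum_O. reflexivity.
    + apply H. lia.
  - rewrite sum_Sn.
    apply is_sumZ_ext with (fun k => sum_n (fun j => F j k) N + F (S N) k).
    + intro k. rewrite sum_Sn. reflexivity.
    + apply is_sumZ_plus; [apply IHN; intros; apply H |apply H]; lia.
Qed.

Lemma is_sumZ_shift_1 (f : Z -> C) (s : C) : is_sumZ f s -> is_sumZ (fun k => f (k + 1)%Z) s.
Proof.
  intros (s1 & s2 & H1 & H2 & ->).
  exists (s1 - f 0%Z), (s2 + f 0%Z). split; [|split].
  - apply (is_series_ext (fun j : nat => f (Z.of_nat (S j)))); [intro; f_equal; lia|].
    apply (is_series_incr_1 (fun j : nat => f (Z.of_nat j))).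
    assert (E : s1 = plus (s1 - f 0%Z) (f (Z.of_nat 0))) by (to_C; simpl; ring).
    rewrite E in H1.
    exact H1.
  - apply (is_series_ext (fun j : nat => f (- Z.of_nat j)%Z)); [intro; f_equal; lia|].
    apply is_series_decr_1.
    assert (E : s2 = plus (s2 + f 0%Z) (opp (f (- Z.of_nat 0)%Z))) by (to_C; simpl; ring).
    rewrite E in H2.
    apply (is_series_ext (fun j : nat => f (- Z.of_nat (S j))%Z)); [intro; f_equal; lia|].
    exact H2.
  - ring.
Qed.

Lemma is_sumZ_shift_m1 (f : Z -> C) (s : C) : is_sumZ f s -> is_sumZ (fun k => f (k - 1)%Z) s.
Proof.
  intros (s1 & s2 & H1 & H2 & ->).
  exists (s1 + f (-1)%Z), (s2 - f (-1)%Z). split; [|split].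
  - apply is_series_decr_1.
    assert (E : s1 = plus (s1 + f (-1)%Z) (opp (f (Z.of_nat 0 - 1)%Z))) by (to_C; simpl; ring).
    rewrite E in H1.
    apply (is_series_ext (fun j : nat => f (Z.of_nat j))); [intro; f_equal; lia|]. exact H1.
  - apply (is_series_ext (fun j : nat => f (- Z.of_nat (S (S j)))%Z)); [intro; f_equal; lia|].
    apply (is_series_incr_1 (fun j : nat => f (- Z.of_nat (S j))%Z)).
    assert (E : s2 = plus (s2 - f (-1)%Z) (f (- Z.of_nat 1)%Z)) by (to_C; simpl; ring).
    rewrite E in H2.
    exact H2.
  - ring.
Qed.

Lemma is_sumZ_shift (f : Z -> C) (s : C) (c : Z) : is_sumZ f s -> is_sumZ (fun k => f (k + c)%Z) s.
Proof.
  intro H. induction c using Z.peano_ind.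
  - apply is_sumZ_ext with f; [intro; f_equal; lia | exact H].
  - apply is_sumZ_ext with (fun k => f (k + 1 + c)%Z); [intro; f_equal; lia|].
    apply (is_sumZ_shift_1 (fun k => f (k + c)%Z)), IHc.
  - apply is_sumZ_ext with (fun k => f (k - 1 + c)%Z); [intro; f_equal; lia|].
    apply (is_sumZ_shift_m1 (fun k => f (k + c)%Z)), IHc.
Qed.

Definition geom_decay (f : Z -> C) : Prop :=
  exists (c rho : R) (K : Z), (0 <= c)%R /\ (0 < rho < 1)%R /\
    forall k, (K <= Z.abs k)%Z -> (Cmod (f k) <= c * rho ^ Z.abs_nat k)%R.

Lemma geom_decay_le (f g : Z -> C) :
  (forall k, Cmod (g k) <= Cmod (f k))%R -> geom_decay f -> geom_decay g.
Proof.
  intros Hle (c & rho & K & Hc & Hr & Hb). exists c, rho, K. split; [exact Hc | split; [exact Hr |]].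
  intros k Hk. eapply Rle_trans; [apply Hle | apply Hb, Hk].
Qed.

Lemma pow_le_pow_lt_1 (rho : R) (m n : nat) : (0 < rho < 1)%R -> (m <= n)%nat ->
  (rho ^ n <= rho ^ m)%R.
Proof.
  intros Hr Hmn. replace n with (m + (n - m))%nat by lia. rewrite pow_add.
  assert (0 <= rho ^ m)%R by (apply pow_le; lra).
  assert (rho ^ (n - m) <= 1)%R by (rewrite <- (pow1 (n - m)); apply pow_incr; lra).
  nra.
Qed.

Lemma geom_decay_progression (f : Z -> C) (l r : Z) : (0 < l)%Z ->
  geom_decay f -> geom_decay (fun m => f (m * l + r)%Z).
Proof.
  intros Hl (c & rho & K & Hc & Hr & Hb).
  assert (Hp : (0 < rho ^ Z.abs_nat r)%R) by (apply pow_lt; lra).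
  exists (c / rho ^ Z.abs_nat r)%R, rho, (Z.abs K + Z.abs r)%Z.
  split; [|split; [exact Hr|]].
  - apply Rmult_le_pos; auto. left; apply Rinv_0_lt_compat; auto.
  - intros m Hm.
    assert (Hml : (Z.abs m <= Z.abs (m * l))%Z) by (rewrite Z.abs_mul; nia).
    eapply Rle_trans; [apply Hb; lia|].
    unfold Rdiv. rewrite Rmult_assoc. apply Rmult_le_compat_l; auto.
    apply (Rmult_le_reg_l (rho ^ Z.abs_nat r)); auto.
    rewrite <- pow_add.
    replace (rho ^ Z.abs_nat r * (/ rho ^ Z.abs_nat r * rho ^ Z.abs_nat m))%R
      with (rho ^ Z.abs_nat m)%R by (field; lra).
    apply pow_le_pow_lt_1; auto. lia.
Qed.

Lemma geom_decay_ex_series (f : Z -> C) : geom_decay f ->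
  ex_series (fun j : nat => f (Z.of_nat j)) /\ ex_series (fun j : nat => f (- Z.of_nat (S j))%Z).
Proof.
  intros (c & rho & K & Hc & Hr & Hb).
  assert (Hgeom : forall N, ex_series (fun k => c * rho ^ (N + k))%R).
  { intro N. apply ex_series_ext with (fun k => (rho ^ k * (c * rho ^ N))%R).
    - intro k. rewrite pow_add. change (rho ^ k * (c * rho ^ N) = c * (rho ^ N * rho ^ k))%R. ring.
    - apply ex_series_scal_r, ex_series_geom. rewrite Rabs_pos_eq; lra. }
  split; apply (ex_series_incr_n _ (Z.to_nat K)).
  - apply (@ex_series_le C_AbsRing C_CompleteNormedModule _
             (fun k => c * rho ^ (Z.to_nat K + k))%R); [|apply Hgeom].
    intro k. change (Cmod (f (Z.of_nat (Z.to_nat K + k))) <= c * rho ^ (Z.to_nat K + k))%R.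
    eapply Rle_trans; [apply Hb; lia|]. right. do 2 f_equal. lia.
  - apply (@ex_series_le C_AbsRing C_CompleteNormedModule _
             (fun k => c * rho ^ (S (Z.to_nat K) + k))%R); [|apply Hgeom].
    intro k. change (Cmod (f (- Z.of_nat (S (Z.to_nat K + k)))%Z)
                       <= c * rho ^ (S (Z.to_nat K) + k))%R.
    eapply Rle_trans; [apply Hb; lia|]. right. do 2 f_equal. lia.
Qed.

Definition Cseries (a : nat -> C) : C := Clim (sum_n a).

Lemma is_series_Cseries (a : nat -> C) : ex_series a -> is_series a (Cseries a).
Proof. intros [s H]. unfold Cseries. rewrite (Clim_eq (sum_n a) s H). exact H. Qed.

Lemma geom_decay_is_sumZ_halves (f : Z -> C) : geom_decay f ->
  is_sumZ f (Cseries (fun j : nat => f (Z.of_nat j))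
             + Cseries (fun j : nat => f (- Z.of_nat (S j))%Z)).
Proof.
  intro H. destruct (geom_decay_ex_series f H) as [E1 E2].
  do 2 eexists. split; [|split]; [apply is_series_Cseries, E1 | apply is_series_Cseries, E2 |].
  reflexivity.
Qed.

Lemma sumZ_halves (f : Z -> C) : geom_decay f ->
  sumZ f = Cseries (fun j : nat => f (Z.of_nat j))
           + Cseries (fun j : nat => f (- Z.of_nat (S j))%Z).
Proof. intro H. apply is_sumZ_sumZ, geom_decay_is_sumZ_halves, H. Qed.

Lemma geom_decay_is_sumZ (f : Z -> C) : geom_decay f -> is_sumZ f (sumZ f).
Proof. intro H. rewrite (sumZ_halves f H). apply geom_decay_is_sumZ_halves, H. Qed.

Lemma sumZ_scal (f : Z -> C) (c : C) : geom_decay f -> sumZ (fun k => c * f k) = c * sumZ f.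
Proof. intro H. apply is_sumZ_sumZ, is_sumZ_scal, geom_decay_is_sumZ, H. Qed.

Lemma sumZ_sum_n (F : nat -> Z -> C) (N : nat) : (forall j, (j <= N)%nat -> geom_decay (F j)) ->
  sumZ (fun k => sum_n (fun j => F j k) N) = sum_n (fun j => sumZ (F j)) N.
Proof.
  intro H. apply is_sumZ_sumZ, is_sumZ_sum_n. intros j Hj. apply geom_decay_is_sumZ, H, Hj.
Qed.

Lemma sumZ_shift (f : Z -> C) (c : Z) : geom_decay f -> sumZ (fun k => f (k + c)%Z) = sumZ f.
Proof. intro H. apply is_sumZ_sumZ, is_sumZ_shift, geom_decay_is_sumZ, H. Qed.

Lemma sum_n_add_blocks {G : AbelianMonoid} (a : nat -> G) (N k : nat) :
  sum_n a (N + S k) = plus (sum_n a N) (sum_n (fun i => a (N + S i)%nat) k).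
Proof.
  induction k.
  - rewrite sum_O, <- plus_n_Sm, <- plus_n_O, sum_Sn. reflexivity.
  - rewrite <- plus_n_Sm, sum_Sn, IHk, sum_Sn, plus_assoc. do 2 f_equal. lia.
Qed.

Lemma sum_n_residues (a : nat -> C) (L q : nat) : (1 <= L)%nat ->
  sum_n a (q * L + (L - 1)) = sum_n (fun r => sum_n (fun m => a (m * L + r)%nat) q) (L - 1).
Proof.
  intro HL. induction q.
  - apply sum_n_ext. intro r. rewrite sum_O. reflexivity.
  - replace (S q * L + (L - 1))%nat with ((q * L + (L - 1)) + S (L - 1))%nat by (simpl; lia).
    rewrite sum_n_add_blocks, IHq, <- sum_n_plus.
    apply sum_n_ext. intro r. rewrite sum_Sn. do 2 f_equal. simpl. lia.
Qed.

Lemma filterlim_sum_n {T} {F} {FF : Filter F} (u : nat -> T -> C) (b : nat -> C) (N : nat) :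
  (forall r, (r <= N)%nat -> filterlim (u r) F (locally (b r))) ->
  filterlim (fun x => sum_n (fun r => u r x) N) F (locally (sum_n b N)).
Proof.
  induction N; intro H.
  - rewrite sum_O. apply filterlim_ext with (u 0%nat).
    + intro. rewrite sum_O. reflexivity.
    + apply H. lia.
  - rewrite sum_Sn.
    apply filterlim_ext with (fun x => sum_n (fun r => u r x) N + u (S N) x).
    + intro. rewrite sum_Sn. reflexivity.
    + apply filterlim_Cplus; [apply IHN; intros; apply H |apply H]; lia.
Qed.

Lemma is_series_residues (a : nat -> C) (L : nat) (s : C) (b : nat -> C) :
  (1 <= L)%nat -> is_series a s ->
  (forall r, (r <= L - 1)%nat -> is_series (fun m => a (m * L + r)%nat) (b r)) ->
  s = sum_n b (L - 1).
Proof.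
  intros HL Ha Hb.
  apply (filterlim_locally_unique (F := eventually) (fun q => sum_n a (q * L + (L - 1))%nat)).
  - apply (filterlim_comp _ _ _ (fun q => (q * L + (L - 1))%nat) (sum_n a) _ eventually);
      [|exact Ha].
    intros P [N HN]. exists N. intros q Hq. apply HN. nia.
  - apply filterlim_ext with
      (fun q => sum_n (fun r => sum_n (fun m => a (m * L + r)%nat) q) (L - 1)).
    + intro q. symmetry. apply sum_n_residues, HL.
    + apply filterlim_sum_n. exact Hb.
Qed.

Lemma sum_n_reverse (b : nat -> C) (N : nat) : sum_n b N = sum_n (fun r => b (N - r)%nat) N.
Proof.
  induction N.
  - rewrite !sum_O. reflexivity.
  - rewrite sum_Sn, sum_n_first, IHN. simpl. to_C. ring.
Qed.

(* On the negative half, -(m L + r + 1) = -(m + 1) L + (L - 1 - r): residues appear reversed. *)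
Lemma sumZ_residues_nat (f : Z -> C) (L : nat) : (1 <= L)%nat -> geom_decay f ->
  sumZ f = sum_n (fun r => sumZ (fun m => f (m * Z.of_nat L + Z.of_nat r)%Z)) (L - 1).
Proof.
  intros HL Hf.
  set (fr := fun (r : nat) (m : Z) => f (m * Z.of_nat L + Z.of_nat r)%Z).
  assert (Hfr : forall r, geom_decay (fr r))
    by (intro r; apply geom_decay_progression; [lia | exact Hf]).
  change (sumZ f = sum_n (fun r => sumZ (fr r)) (L - 1)).
  rewrite (sum_n_ext _ (fun r => plus (Cseries (fun m : nat => fr r (Z.of_nat m)))
                                       (Cseries (fun m : nat => fr r (- Z.of_nat (S m))%Z))))
    by (intro r; apply sumZ_halves, Hfr).
  rewrite sumZ_halves, sum_n_plus by exact Hf. to_C.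
  destruct (geom_decay_ex_series f Hf) as [Hpos Hneg].
  f_equal.
  - apply (is_series_residues (fun j : nat => f (Z.of_nat j)) L); [exact HL | apply is_series_Cseries, Hpos |].
    intros r Hr. destruct (geom_decay_ex_series (fr r) (Hfr r)) as [Hp _].
    apply is_series_Cseries in Hp. revert Hp. apply is_series_ext. intro m. unfold fr. f_equal. lia.
  - rewrite sum_n_reverse.
    apply (is_series_residues (fun j : nat => f (- Z.of_nat (S j))%Z) L);
      [exact HL | apply is_series_Cseries, Hneg |].
    intros r Hr. destruct (geom_decay_ex_series (fr (L - 1 - r)%nat) (Hfr _)) as [_ Hn].
    apply is_series_Cseries in Hn. revert Hn. apply is_series_ext. intro m. unfold fr. f_equal. nia.
Qed.

Lemma sumZ_residues (f : Z -> C) (n l : Z) : (0 < l)%Z -> geom_decay f ->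
  sumZ f = sumI n l (fun r => sumZ (fun m => f (m * l + r)%Z)).
Proof.
  intros Hl Hf.
  rewrite <- (sumZ_shift f n Hf), (sumZ_ext _ (fun m => f (m * 1 + n)%Z)) by (intro; f_equal; lia).
  rewrite (sumZ_residues_nat _ (Z.to_nat l)); [| lia | apply geom_decay_progression; [lia | exact Hf]].
  unfold sumI. replace (Z.to_nat l - 1)%nat with (Z.to_nat (l - 1)) by lia.
  apply sum_n_ext. intro j. apply sumZ_ext. intro m. f_equal. lia.
Qed.

Lemma sumZ_progression_of_support (g : Z -> C) (l t : Z) : (0 < l)%Z -> geom_decay g ->
  (forall k, ((k - t) mod l <> 0)%Z -> g k = 0) ->
  sumZ g = sumZ (fun m => g (m * l + t)%Z).
Proof.
  intros Hl Hg Hsupp.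
  rewrite (sumZ_residues g t l Hl Hg). unfold sumI.
  destruct (Z.to_nat (l - 1)) as [|N] eqn:EN.
  - rewrite sum_O. apply sumZ_ext. intro m. f_equal. lia.
  - rewrite sum_n_first, (sum_n_ext_loc _ (fun _ => zero)).
    + unfold sum_n at 1. rewrite sum_n_m_const_zero. to_C. rewrite Cplus_0_r.
      apply sumZ_ext. intro m. f_equal. lia.
    + intros i Hi. to_C.
      rewrite <- (Cmult_0_l (sumZ (fun m => g (m * l + t)%Z))), <- sumZ_scal
        by (apply geom_decay_progression; auto).
      apply sumZ_ext. intro m. rewrite Hsupp; [ring|].
      replace (m * l + (t + Z.of_nat (S i)) - t)%Z with (Z.of_nat (S i) + m * l)%Z by ring.
      rewrite Z_mod_plus_full, Z.mod_small; lia.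
Qed.

(** * Discrete Fourier analysis on Z / l Z *)

Lemma geom_decay_mul_bounded (f w : Z -> C) :
  (forall k, Cmod (w k) <= 1)%R -> geom_decay f -> geom_decay (fun k => f k * w k).
Proof.
  intro Hw. apply geom_decay_le. intro k. rewrite Cmod_mult.
  pose proof (Hw k). pose proof (Cmod_ge_0 (f k)). nra.
Qed.

Section DiscreteFourier.

Variables (n l : Z) (f : Z -> C).
Hypotheses (hl : (0 < l)%Z) (hf : geom_decay f).

Lemma geom_decay_twist (a : Z -> Z) : geom_decay (fun k => f k * xi l (a k)).
Proof. apply geom_decay_mul_bounded; [|exact hf]. intro k. rewrite Cmod_xi by exact hl. lra. Qed.

Lemma sumZ_twist_residues (t : Z) :
  sumZ (fun k => f k * xi l (t * k)) =
  sumI n l (fun s => xi l (t * s) * sumZ (fun m => f (m * l + s)%Z)).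
Proof.
  rewrite (sumZ_residues _ n l hl (geom_decay_twist _)).
  apply sumI_ext. intro s.
  rewrite <- sumZ_scal by (apply geom_decay_progression; assumption).
  apply sumZ_ext. intro m.
  replace (t * (m * l + s))%Z with (t * m * l + t * s)%Z by ring.
  rewrite <- xi_add, xi_mul_l by exact hl. ring.
Qed.

Lemma sumZ_progression_fourier (t : Z) :
  sumZ (fun m => f (m * l + t)%Z) =
  RtoC (/ IZR l) * sumI n l (fun s => xi l (- (t * s)) * sumZ (fun k => f k * xi l (s * k))).
Proof.
  set (g := fun k => f k * (if ((k - t) mod l =? 0)%Z then 1 else 0)).
  assert (Hg : geom_decay g).
  { apply geom_decay_mul_bounded; [|exact hf]. intro k.
    destruct (_ =? _)%Z; [rewrite Cmod_1 | rewrite Cmod_0]; lra. }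
  assert (Hexch : sumI n l (fun s => xi l (- (t * s)) * sumZ (fun k => f k * xi l (s * k)))
                  = CZ l * sumZ g).
  { transitivity (sumI n l (fun s => sumZ (fun k => f k * xi l (s * (k - t))))).
    - apply sumI_ext. intro s. rewrite <- sumZ_scal by apply geom_decay_twist.
      apply sumZ_ext. intro k.
      replace (s * (k - t))%Z with (- (t * s) + s * k)%Z by ring.
      rewrite <- xi_add by exact hl. ring.
    - unfold sumI. rewrite <- sumZ_sum_n by (intros; apply geom_decay_twist).
      rewrite <- sumZ_scal by exact Hg. apply sumZ_ext. intro k.
      rewrite (sum_n_mult_l (f k) (fun j => xi l ((n + Z.of_nat j) * (k - t)))).
      change (f k * sumI n l (fun s => xi l (s * (k - t))) = CZ l * g k).
      rewrite sumI_xi_mul by exact hl. unfold g. destruct (_ =? _)%Z; ring. }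
  rewrite Hexch, Cmult_assoc.
  replace (RtoC (/ IZR l) * CZ l) with (RtoC 1)
    by (unfold CZ; rewrite <- RtoC_mult, Rinv_l; [reflexivity | apply not_0_IZR; lia]).
  rewrite Cmult_1_l. symmetry.
  rewrite (sumZ_progression_of_support g l t hl Hg).
  - apply sumZ_ext. intro m. unfold g.
    replace ((m * l + t - t) mod l)%Z with 0%Z by (rewrite Z.add_simpl_r, Z_mod_mult; reflexivity).
    simpl. ring.
  - intros k Hk. unfold g. apply Z.eqb_neq in Hk. rewrite Hk. ring.
Qed.

End DiscreteFourier.

(** * The characters as twisted sums *)

Definition atypical_prefactor (u tau : C) : C :=
  - Ci * theta1 u tau / (eta tau * eta tau * eta tau).

Definition atypical_term (A : Z) (n' : R) (u v tau : C) (k : Z) : C :=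
  sgnZ k * Cexp (twoPiI * v * CZ k)
  * Cexp (twoPiI * u * (CZ (A * k) + RtoC n' + RtoC (/2)))
  * Cexp (PiI * tau * CZ k * (CZ k * CZ (2 * A + 1) + RtoC (2 * n') + RtoC 1))
  / (RtoC 1 - Cexp (twoPiI * (u + CZ k * tau))).

Lemma chiA_progression (N L : Z) (n' : R) (r : Z) (u v tau : C) :
  chiA N L n' r u v tau
  = atypical_prefactor u tau * sumZ (fun m => atypical_term (N / L) n' u v tau (m * L + r)).
Proof. reflexivity. Qed.

Lemma chiA_unit (A : Z) (n' : R) (u v tau : C) :
  chiA A 1 n' 0 u v tau = atypical_prefactor u tau * sumZ (atypical_term A n' u v tau).
Proof.
  rewrite chiA_progression, Z.div_1_r. f_equal.
  apply sumZ_ext. intro m. f_equal. ring.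
Qed.

Lemma atypical_term_shift (A : Z) (n' : R) (u v tau : C) (l s k : Z) : l <> 0%Z ->
  atypical_term A n' u (v + CZ s / CZ l) tau k = atypical_term A n' u v tau k * xi l (s * k).
Proof.
  intro hl. unfold atypical_term, xi.
  replace (twoPiI * (v + CZ s / CZ l) * CZ k) with (twoPiI * v * CZ k + twoPiI * CZ (s * k) / CZ l)
    by (rewrite CZ_mul; field; apply CZ_neq_0, hl).
  rewrite Cexp_add. unfold Cdiv. ring.
Qed.

Definition typical_prefactor (e' u tau : C) : C :=
  Ci * sgnZ (floorRe e') * theta1 u tau / (eta tau * eta tau * eta tau).

Definition typical_term (a : Z) (n' e' u v tau : C) (k : Z) : C :=
  sgnZ k * Cexp (twoPiI * v * (e' + CZ k) + twoPiI * u * (n' + CZ (a * k))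
    + twoPiI * tau * (n' * e' + e' * e' / RtoC 2 + CZ (k * k) / RtoC 2 * CZ (2 * a + 1)
                      + CZ k * (CZ a * e' + n' + e'))).

Lemma typical_term_shift (a : Z) (n' e' u v tau : C) (l s k : Z) : l <> 0%Z ->
  typical_term a n' e' u (v + CZ s / CZ l) tau k
  = Cexp (twoPiI * e' * CZ s / CZ l) * (typical_term a n' e' u v tau k * xi l (s * k)).
Proof.
  intro hl. unfold typical_term, xi.
  match goal with |- _ * Cexp ?L = Cexp ?E * (_ * Cexp ?X * Cexp ?F) =>
    replace L with (E + X + F) by (rewrite !CZ_mul; field; apply CZ_neq_0, hl) end.
  rewrite !Cexp_add. ring.
Qed.

(* Reindexing k = m l + t: the parameters (n' + t a, e' + t) of T^{n,l} absorb the offset t,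
   and the sign (-1)^floor(e' + t) contributes the factor (-1)^t that cancels against sgn k. *)
Lemma chiT_progression (a n l : Z) (n' e' : C) (t : Z) (u v tau : C) :
  (0 < l)%Z -> n = (a * l)%Z -> geom_decay (typical_term a n' e' u v tau) ->
  chiT n l (n' + CZ (t * a)) (e' + CZ t) u v tau
  = typical_prefactor e' u tau * sumZ (fun m => typical_term a n' e' u v tau (m * l + t)).
Proof.
  intros hl hn hdec. unfold chiT. rewrite floorRe_add_int, sgnZ_add.
  rewrite (sumZ_ext _ (fun m => sgnZ t * typical_term a n' e' u v tau (m * l + t))).
  - rewrite sumZ_scal by (apply geom_decay_progression; assumption).
    unfold typical_prefactor, Cdiv.
    transitivity (Ci * sgnZ (floorRe e') * theta1 u tau * / (eta tau * eta tau * eta tau)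
      * sumZ (fun m => typical_term a n' e' u v tau (m * l + t)) * (sgnZ t * sgnZ t)); [ring|].
    rewrite sgnZ_mul_self. ring.
  - intro m. unfold typical_term. subst n.
    match goal with |- sgnZ ?x * Cexp ?A * Cexp ?B * Cexp ?C = _ * (_ * Cexp ?E) =>
      replace E with (A + B + C);
      [ rewrite !Cexp_add, sgnZ_add;
        transitivity (sgnZ t * sgnZ t * sgnZ x * (Cexp A * Cexp B * Cexp C));
        [rewrite sgnZ_mul_self | ]; ring
      | rewrite !CZ_mul, !CZ_add, !CZ_mul; change (CZ 1) with (RtoC 1);
        change (CZ 2) with (RtoC 2); field ] end.
Qed.

Lemma chiT_unit (a : Z) (n' e' u v tau : C) : geom_decay (typical_term a n' e' u v tau) ->
  chiT a 1 n' e' u v tau = typical_prefactor e' u tau * sumZ (typical_term a n' e' u v tau).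
Proof.
  intro hdec.
  replace (chiT a 1 n' e' u v tau) with (chiT a 1 (n' + CZ (0 * a)) (e' + CZ 0) u v tau)
    by (rewrite Z.mul_0_l; f_equal; change (CZ 0) with (RtoC 0); ring).
  rewrite (chiT_progression a a 1) by (lia || exact hdec).
  f_equal. apply sumZ_ext. intro m. f_equal. ring.
Qed.

(** * Gaussian decay *)

Lemma Cmod_Cexp_quadratic (c2 c1 c0 : C) (x : R) :
  Cmod (Cexp (c2 * RtoC x * RtoC x + c1 * RtoC x + c0)) = exp (Re c2 * x * x + Re c1 * x + Re c0).
Proof. rewrite Cmod_Cexp. f_equal. destruct c2, c1, c0. simpl. ring. Qed.

Lemma geom_decay_gaussian (f : Z -> C) (c2 c1 c0 : C) (M : R) (K : Z) :
  (Re c2 < 0)%R -> (0 <= M)%R ->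
  (forall k, (K <= Z.abs k)%Z ->
     Cmod (f k) <= M * Cmod (Cexp (c2 * CZ k * CZ k + c1 * CZ k + c0)))%R ->
  geom_decay f.
Proof.
  intros Hc2 HM Hb.
  set (al := (- Re c2)%R). set (b := (Rabs (Re c1) + 1)%R).
  assert (Hal : (0 < al)%R) by (unfold al; lra).
  exists (M * exp (Re c0 + b * b / (4 * al)))%R, (exp (-1)), K.
  split; [apply Rmult_le_pos; [exact HM | left; apply exp_pos]|].
  split; [split; [apply exp_pos | rewrite <- exp_0; apply exp_increasing; lra]|].
  intros k Hk. eapply Rle_trans; [apply Hb, Hk|].
  unfold CZ. rewrite Cmod_Cexp_quadratic, (Rmult_assoc M).
  apply Rmult_le_compat_l; [exact HM|].
  assert (Hpow : forall N, (exp (-1) ^ N = exp (- INR N))%R).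
  { induction N.
    - simpl. rewrite Ropp_0, exp_0. reflexivity.
    - simpl pow. rewrite IHN, <- exp_plus, S_INR. f_equal. ring. }
  rewrite Hpow, <- exp_plus, INR_IZR_INZ, Zabs2Nat.id_abs, abs_IZR.
  set (x := IZR k). set (y := Rabs x).
  assert (Hexp : (Re c2 * x * x + Re c1 * x + Re c0 <= Re c0 + b * b / (4 * al) + - y)%R).
  { assert (Hy : (0 <= y)%R) by apply Rabs_pos.
    assert (Hlin : (Re c1 * x <= Rabs (Re c1) * y)%R)
      by (unfold y; rewrite <- Rabs_mult; apply Rle_abs).
    assert (Hsq : (x * x = y * y)%R)
      by (unfold y; rewrite <- Rabs_mult, Rabs_pos_eq; [reflexivity | nra]).
    assert (Hq : (- al * y * y + b * y <= b * b / (4 * al))%R).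
    { apply (Rmult_le_reg_l (4 * al)); [lra|].
      replace (4 * al * (b * b / (4 * al)))%R with (b * b)%R by (field; lra).
      pose proof (Rle_0_sqr (2 * al * y - b)) as Hs. unfold Rsqr in Hs. nra. }
    unfold al, b in *. nra. }
  destruct (Rle_lt_or_eq_dec _ _ Hexp) as [Hlt | ->];
    [left; apply exp_increasing, Hlt | right; reflexivity].
Qed.

(* For large |k| the point e^{2 pi i (u + k tau)} is either inside the disc of radius 1/2
   (k > 0) or outside the disc of radius 2 (k < 0). *)
Lemma Cmod_one_sub_Cexp_ge (u tau : C) : (0 < Im tau)%R -> exists K : Z, forall k,
  (K <= Z.abs k)%Z -> (/ 2 <= Cmod (1 - Cexp (twoPiI * (u + CZ k * tau))))%R.
Proof.
  intro Ht.
  exists (up ((Rabs (Im u) + 1) / Im tau)). intros k Hk.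
  destruct (archimed ((Rabs (Im u) + 1) / Im tau)) as [Hup _].
  set (w := Cexp (twoPiI * (u + CZ k * tau))).
  assert (Hw : Cmod w = exp (- (2 * PI) * (Im u + IZR k * Im tau))).
  { unfold w. rewrite Cmod_Cexp. f_equal. unfold twoPiI, CZ, Re, Im. simpl. ring. }
  assert (Hk' : (Rabs (IZR k) * Im tau > Rabs (Im u) + 1)%R).
  { apply IZR_le in Hk. rewrite abs_IZR in Hk.
    assert (Hgt : (Rabs (IZR k) > (Rabs (Im u) + 1) / Im tau)%R) by lra.
    apply (Rmult_gt_compat_r (Im tau)) in Hgt; auto.
    unfold Rdiv in Hgt. rewrite Rmult_assoc, Rinv_l, Rmult_1_r in Hgt; lra. }
  assert (T1 : (1 <= Cmod (1 - w) + Cmod w)%R).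
  { pose proof (Cmod_triangle (1 - w) w) as Htri.
    replace (1 - w + w) with (RtoC 1) in Htri by ring. rewrite Cmod_1 in Htri. exact Htri. }
  assert (T2 : (Cmod w <= Cmod (1 - w) + 1)%R).
  { replace w with (- (1 - w) + 1) at 1 by ring.
    eapply Rle_trans; [apply Cmod_triangle|]. rewrite Cmod_opp, Cmod_1. lra. }
  pose proof PI2_1 as Hpi.
  assert (He : (2 < exp 1)%R) by (pose proof (exp_ineq1 1 ltac:(lra)); lra).
  pose proof (Rabs_pos (Im u)). pose proof (Rle_abs (Im u)). pose proof (Rle_abs (- Im u)).
  rewrite Rabs_Ropp in *.
  destruct (Rle_or_lt 0 (IZR k)) as [Hk0 | Hk0].
  - rewrite Rabs_pos_eq in Hk' by exact Hk0.
    assert (Cmod w < / 2)%R.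
    { rewrite Hw. apply (Rlt_trans _ (exp (-1))); [apply exp_increasing; nra|].
      assert (E : (exp (-1) * exp 1 = 1)%R)
        by (rewrite <- exp_plus; replace (-1 + 1)%R with 0%R by ring; apply exp_0).
      pose proof (exp_pos (-1)). nra. }
    lra.
  - rewrite Rabs_left in Hk' by exact Hk0.
    assert (2 < Cmod w)%R.
    { rewrite Hw. apply (Rlt_trans _ (exp 1)); [exact He | apply exp_increasing; nra]. }
    lra.
Qed.

Lemma atypical_term_gaussian (A : Z) (n' : R) (u v tau : C) : exists c1 c0 : C, forall k,
  atypical_term A n' u v tau k
  = sgnZ k * Cexp (PiI * tau * CZ (2 * A + 1) * CZ k * CZ k + c1 * CZ k + c0)
    / (1 - Cexp (twoPiI * (u + CZ k * tau))).
Proof.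
  exists (twoPiI * v + twoPiI * u * CZ A + PiI * tau * (RtoC (2 * n') + 1)),
         (twoPiI * u * (RtoC n' + RtoC (/2))).
  intro k. unfold atypical_term.
  match goal with |- sgnZ _ * Cexp ?A * Cexp ?B * Cexp ?C / _ = sgnZ _ * Cexp ?E / _ =>
    replace E with (A + B + C) by (rewrite CZ_mul; ring) end.
  rewrite !Cexp_add. unfold Cdiv. ring.
Qed.

Lemma typical_term_gaussian (a : Z) (n' e' u v tau : C) : exists c1 c0 : C, forall k,
  typical_term a n' e' u v tau k
  = sgnZ k * Cexp (PiI * tau * CZ (2 * a + 1) * CZ k * CZ k + c1 * CZ k + c0).
Proof.
  exists (twoPiI * v + twoPiI * u * CZ a + twoPiI * tau * (CZ a * e' + n' + e')),
         (twoPiI * v * e' + twoPiI * u * n' + twoPiI * tau * (n' * e' + e' * e' / RtoC 2)).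
  intro k. unfold typical_term. do 2 f_equal.
  replace twoPiI with (RtoC 2 * PiI)
    by (unfold twoPiI, PiI; apply injective_projections; simpl; ring).
  rewrite !CZ_mul. field.
Qed.

Lemma Re_PiI_mul_CZ (tau : C) (j : Z) : Re (PiI * tau * CZ j) = (- (PI * Im tau * IZR j))%R.
Proof. destruct tau. unfold PiI, CZ. simpl. ring. Qed.

Lemma geom_decay_atypical_term (A : Z) (n' : R) (u v tau : C) :
  (0 <= A)%Z -> (0 < Im tau)%R -> geom_decay (atypical_term A n' u v tau).
Proof.
  intros hA htau.
  destruct (atypical_term_gaussian A n' u v tau) as (c1 & c0 & Egauss).
  destruct (Cmod_one_sub_Cexp_ge u tau htau) as [K HK].
  apply (geom_decay_gaussian _ (PiI * tau * CZ (2 * A + 1)) c1 c0 2 K); [| lra |].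
  - rewrite Re_PiI_mul_CZ. pose proof PI_RGT_0.
    assert (0 < IZR (2 * A + 1))%R by (apply IZR_lt; lia).
    pose proof (Rmult_lt_0_compat _ _ (Rmult_lt_0_compat _ _ H H0) htau). nra.
  - intros k Hk. specialize (HK k Hk). rewrite Egauss.
    assert (Hd : 1 - Cexp (twoPiI * (u + CZ k * tau)) <> 0)
      by (intro Hz; rewrite Hz, Cmod_0 in HK; lra).
    rewrite Cmod_div, Cmod_mult, Cmod_sgnZ, Rmult_1_l by exact Hd.
    pose proof (Cmod_ge_0 (Cexp (PiI * tau * CZ (2 * A + 1) * CZ k * CZ k + c1 * CZ k + c0))).
    unfold Rdiv. apply (Rmult_le_reg_r (Cmod (1 - Cexp (twoPiI * (u + CZ k * tau))))); [lra|].
    rewrite Rmult_assoc, Rinv_l by lra. nra.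
Qed.

Lemma geom_decay_typical_term (a : Z) (n' e' u v tau : C) :
  (0 <= a)%Z -> (0 < Im tau)%R -> geom_decay (typical_term a n' e' u v tau).
Proof.
  intros ha htau.
  destruct (typical_term_gaussian a n' e' u v tau) as (c1 & c0 & Egauss).
  apply (geom_decay_gaussian _ (PiI * tau * CZ (2 * a + 1)) c1 c0 1 0); [| lra |].
  - rewrite Re_PiI_mul_CZ. pose proof PI_RGT_0.
    assert (0 < IZR (2 * a + 1))%R by (apply IZR_lt; lia).
    pose proof (Rmult_lt_0_compat _ _ (Rmult_lt_0_compat _ _ H H0) htau). nra.
  - intros k _. rewrite Egauss, Cmod_mult, Cmod_sgnZ. lra.
Qed.

Section CharacterIdentities.

Variables (a n l : Z) (u v tau : C).
Hypotheses (hl : (0 < l)%Z) (hn : n = (a * l)%Z) (ha : (0 <= a)%Z) (htau : (0 < Im tau)%R).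

Let hA : (n / l)%Z = a.
Proof. subst n. apply Z.div_mul. lia. Qed.

Let hdecA (n' : R) (w : C) : geom_decay (atypical_term a n' u w tau).
Proof. exact (geom_decay_atypical_term a n' u w tau ha htau). Qed.

Let hdecT (n' e' w : C) : geom_decay (typical_term a n' e' u w tau).
Proof. exact (geom_decay_typical_term a n' e' u w tau ha htau). Qed.

Lemma chiA_fourier (n' : R) (t : Z) :
  chiA n l n' t u v tau =
  RtoC (/ IZR l) * sumI n l (fun s =>
    xi l (- (t * s)) * chiA a 1 n' 0 u (v + CZ s / CZ l) tau).
Proof.
  rewrite chiA_progression, hA, (sumZ_progression_fourier n l _ hl (hdecA n' v)).
  rewrite (sumI_ext _ _
    (fun s => xi l (- (t * s)) * chiA a 1 n' 0 u (v + CZ s / CZ l) tau)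
    (fun s => atypical_prefactor u tau *
    (xi l (- (t * s)) * sumZ (fun k => atypical_term a n' u v tau k * xi l (s * k))))).
  - rewrite sumI_mult_l. ring.
  - intro s. rewrite chiA_unit.
    rewrite (sumZ_ext _ (fun k => atypical_term a n' u v tau k * xi l (s * k)))
      by (intro k; apply atypical_term_shift; lia).
    ring.
Qed.

Lemma chiA_fourier_inv (n' : R) (t : Z) :
  chiA a 1 n' 0 u (v + CZ t / CZ l) tau =
  sumI n l (fun s => xi l (t * s) * chiA n l n' s u v tau).
Proof.
  rewrite chiA_unit.
  rewrite (sumZ_ext _ (fun k => atypical_term a n' u v tau k * xi l (t * k)))
    by (intro k; apply atypical_term_shift; lia).
  rewrite (sumZ_twist_residues n l _ hl (hdecA n' v)), <- sumI_mult_l.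
  apply sumI_ext. intro s. rewrite chiA_progression, hA. ring.
Qed.

Lemma chiT_fourier (n' e' : C) (t : Z) :
  chiT n l (n' + CZ (t * a)) (e' + CZ t) u v tau =
  RtoC (/ IZR l) * sumI n l (fun s =>
    xi l (- (s * t)) * Cexp (- (twoPiI * e' * CZ s / CZ l))
    * chiT a 1 n' e' u (v + CZ s / CZ l) tau).
Proof.
  rewrite (chiT_progression a n l n' e' t u v tau hl hn (hdecT n' e' v)).
  rewrite (sumZ_progression_fourier n l _ hl (hdecT n' e' v)).
  rewrite (sumI_ext _ _
    (fun s => xi l (- (s * t)) * Cexp (- (twoPiI * e' * CZ s / CZ l))
              * chiT a 1 n' e' u (v + CZ s / CZ l) tau)
    (fun s => typical_prefactor e' u tau *
    (xi l (- (t * s)) * sumZ (fun k => typical_term a n' e' u v tau k * xi l (s * k))))).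
  - rewrite sumI_mult_l. ring.
  - intro s. rewrite (chiT_unit _ _ _ _ _ _ (hdecT n' e' _)).
    rewrite (sumZ_ext _ (fun k => Cexp (twoPiI * e' * CZ s / CZ l)
                                  * (typical_term a n' e' u v tau k * xi l (s * k))))
      by (intro k; apply typical_term_shift; lia).
    rewrite sumZ_scal by (apply geom_decay_twist; [exact hl | apply hdecT]).
    rewrite (Z.mul_comm s t).
    transitivity (typical_prefactor e' u tau
      * (xi l (- (t * s)) * sumZ (fun k => typical_term a n' e' u v tau k * xi l (s * k)))
      * (Cexp (- (twoPiI * e' * CZ s / CZ l)) * Cexp (twoPiI * e' * CZ s / CZ l))); [ring|].
    rewrite Cexp_opp_mul. ring.
Qed.

Lemma chiT_fourier_inv (n' e' : C) (s : Z) :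
  chiT a 1 n' e' u (v + CZ s / CZ l) tau =
  Cexp (twoPiI * e' * CZ s / CZ l) *
  sumI n l (fun t => xi l (s * t) * chiT n l (n' + CZ (t * a)) (e' + CZ t) u v tau).
Proof.
  rewrite (chiT_unit _ _ _ _ _ _ (hdecT n' e' _)).
  rewrite (sumZ_ext _ (fun k => Cexp (twoPiI * e' * CZ s / CZ l)
                                * (typical_term a n' e' u v tau k * xi l (s * k))))
    by (intro k; apply typical_term_shift; lia).
  rewrite sumZ_scal by (apply geom_decay_twist; [exact hl | apply hdecT]).
  rewrite (sumZ_twist_residues n l _ hl (hdecT n' e' v)).
  rewrite (sumI_ext _ _ (fun t => xi l (s * t) * chiT n l (n' + CZ (t * a)) (e' + CZ t) u v tau)
    (fun t => typical_prefactor e' u tau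
              * (xi l (s * t) * sumZ (fun m => typical_term a n' e' u v tau (m * l + t)))))
    by (intro t; rewrite (chiT_progression a n l n' e' t u v tau hl hn (hdecT n' e' v)); ring).
  rewrite sumI_mult_l. ring.
Qed.

End CharacterIdentities.

Theorem mainTheorem5 (l n : Z) (hl : (0 < l)%Z) (hdiv : (n mod l = 0)%Z)
  (hpos : (0 < n * l + l * l)%Z) (u v tau : C) (htau : (0 < Im tau)%R) :
  let a := (n / l)%Z in
  ((forall k : Z, Cexp (twoPiI * (u + CZ k * tau)) <> RtoC 1) ->
   (forall (n' : R) (t : Z),
      chiA n l n' t u v tau =
      RtoC (/ IZR l) * sumI n l (fun s =>
        xi l (- (t * s)) * chiA a 1 n' 0 u (v + CZ s / CZ l) tau)) /\
   (forall (n' : R) (t : Z),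
      chiA a 1 n' 0 u (v + CZ t / CZ l) tau =
      sumI n l (fun s => xi l (t * s) * chiA n l n' s u v tau))) /\
  (forall (n' e' : C) (t : Z),
      chiT n l (n' + CZ (t * a)) (e' + CZ t) u v tau =
      RtoC (/ IZR l) * sumI n l (fun s =>
        xi l (- (s * t)) * Cexp (- (twoPiI * e' * CZ s / CZ l))
        * chiT a 1 n' e' u (v + CZ s / CZ l) tau)) /\
  (forall (n' e' : C) (s : Z),
      chiT a 1 n' e' u (v + CZ s / CZ l) tau =
      Cexp (twoPiI * e' * CZ s / CZ l) *
      sumI n l (fun t => xi l (s * t) * chiT n l (n' + CZ (t * a)) (e' + CZ t) u v tau)).
Proof.
  intro a.
  assert (hn : n = (a * l)%Z) by (unfold a; rewrite Z.mul_comm; apply Z_div_exact_2; lia).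
  (* n l + l^2 = (a + 1) l^2 > 0 forces a >= 0, which gives the Gaussian decay of all series *)
  assert (ha : (0 <= a)%Z) by (rewrite hn in hpos; nia).
  clearbody a.
  split; [intros _; split | split].
  - exact (chiA_fourier a n l u v tau hl hn ha htau).
  - exact (chiA_fourier_inv a n l u v tau hl hn ha htau).
  - exact (chiT_fourier a n l u v tau hl hn ha htau).
  - exact (chiT_fourier_inv a n l u v tau hl hn ha htau).
Qed.
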